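(* Let $\alpha>0$ be an ordinal and let $\mathcal{X},\mathcal{Y}$ be families of metric spaces. If $\mathcal{Y}\in\mathfrak{C}_\alpha$ and $\mathcal{X}\xrightarrow{R}\mathcal{Y}$ for every $R\in\mathbb{R}^{\mathbb{N}}$, then $\mathcal{X}\in\mathfrak{C}_\alpha$.
   Context: A family $\mathcal{U}$ of metric subspaces of a metric space $(X,d)$ is $r$-disjoint if $d(x,y)>r$ whenever $x\in U$, $y\in U'$, $U\neq U'$ in $\mathcal{U}$. For families $\mathcal{X},\mathcal{Y}$ and $R\in\mathbb{R}^{\mathbb{N}}$, $\mathcal{X}\xrightarrow{R}\mathcal{Y}$ (uniform $R$-decomposability) means: there is an integer $k$ such that for each $X\in\mathcal{X}$ there are subcollections $\mathcal{U}_1,\dots,\mathcal{U}_k\subseteq\mathcal{Y}$ of subspaces of $X$, each $\mathcal{U}_i$ being $R_i$-disjoint, with $\bigcup_i\mathcal{U}_i$ covering $X$. A family is bounded if the diameters of its members are uniformly bounded. $\mathfrak{C}_0$ is the class of bounded families; for an ordinal $\alpha>0$, $\mathfrak{C}_\alpha$ is the class of families $\mathcal{X}$ such that for every $R\in\mathbb{R}^{\mathbb{N}}$ there exist $\beta<\alpha$ and $\mathcal{Y}\in\mathfrak{C}_\beta$ with $\mathcal{X}\xrightarrow{R}\mathcal{Y}$. *)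

From Stdlib Require Import Reals.
Open Scope R_scope.

Record MetricSpace := {
  carrier :> Type;
  dist : carrier -> carrier -> R;
  dist_refl : forall x, dist x x = 0;
  dist_sep : forall x y, dist x y = 0 -> x = y;
  dist_sym : forall x y, dist x y = dist y x;
  dist_tri : forall x y z, dist x z <= dist x y + dist y z
}.

(* A metric subspace of M is a subset of M with the induced metric. *)
Definition subspace (M : MetricSpace) := M -> Prop.

Definition mfamily (M : MetricSpace) := subspace M -> Prop.

Definition subset {M : MetricSpace} (A B : subspace M) : Prop :=
  forall x, A x -> B x.

Definition r_disjoint {M : MetricSpace} (r : R) (U : mfamily M) : Prop :=
  forall V V', U V -> U V' -> V <> V' ->
    forall x y, V x -> V' y -> dist M x y > r.

(* Uniform R-decomposability  X --R--> Y  (R_1, ..., R_k used). *)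
Definition decomposes {M : MetricSpace} (Rs : nat -> R) (X Y : mfamily M) : Prop :=
  exists k : nat, forall A, X A ->
    exists U : nat -> mfamily M,
      (forall i, (1 <= i <= k)%nat -> forall V, U i V -> Y V /\ subset V A) /\
      (forall i, (1 <= i <= k)%nat -> r_disjoint (Rs i) (U i)) /\
      (forall x, A x -> exists i, (1 <= i <= k)%nat /\ exists V, U i V /\ V x).

Definition bounded_family {M : MetricSpace} (X : mfamily M) : Prop :=
  exists B : R, forall A, X A -> forall x y, A x -> A y -> dist M x y <= B.

(* Ordinals are represented as elements of a well-ordered type (O, lt);
   the classes C_alpha are defined by (well-founded) recursion as the
   least predicate satisfying the defining clauses. *)
Inductive inC {O : Type} (lt : O -> O -> Prop) {M : MetricSpace}
  : O -> mfamily M -> Prop :=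
| inC_zero : forall (a : O) (X : mfamily M),
    (forall b, ~ lt b a) -> bounded_family X -> inC lt a X
| inC_succ : forall (a : O) (X : mfamily M),
    (exists b, lt b a) ->
    (forall Rs : nat -> R, exists (b : O) (Y : mfamily M),
        lt b a /\ inC lt b Y /\ decomposes Rs X Y) ->
    inC lt a X.

Definition well_order {O : Type} (lt : O -> O -> Prop) : Prop :=
  well_founded lt /\
  (forall a b c, lt a b -> lt b c -> lt a c) /\
  (forall a b, lt a b \/ a = b \/ lt b a).

From Stdlib Require Import Reals Lra Lia ClassicalEpsilon.
Open Scope R_scope.

(* Given R, replace it by its running maximum, which only makes the task
   harder.  Cut the indices 1, 2, ... into consecutive blocks
   (s_t, s_{t+1}], where block t is exactly as long as a decomposition of Y
   into some W_t in C_beta_t (beta_t < alpha) with the radii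
   R_{s_t + 1}, R_{s_t + 2}, ... requires; the blocks are fixed one after the
   other.  Decomposing X into Y with the radii R_{s_1}, R_{s_2}, ... and
   refining the i-th piece family by the decomposition of block i - 1 gives
   X -R-> W_0 u ... u W_{k-1}; a finite union of families of classes below
   alpha lies in a class below alpha. *)

Section Decompositions.

Variable M : MetricSpace.

Definition is_decomposition (Rs : nat -> R) (k : nat) (Y : mfamily M)
    (A : subspace M) (U : nat -> mfamily M) : Prop :=
  (forall i, (1 <= i <= k)%nat -> forall V, U i V -> Y V /\ subset V A) /\
  (forall i, (1 <= i <= k)%nat -> r_disjoint (Rs i) (U i)) /\
  (forall x, A x -> exists i, (1 <= i <= k)%nat /\ exists V, U i V /\ V x).

Definition decomposes_with (k : nat) (Rs : nat -> R) (X Y : mfamily M) : Prop :=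
  forall A, X A -> exists U, is_decomposition Rs k Y A U.

Lemma decomposes_refl Rs (X : mfamily M) : decomposes Rs X X.
Proof.
  exists 1%nat; intros A HA; exists (fun _ V => V = A); split; [|split].
  - intros i _ V ->; split; [exact HA | intros x Hx; exact Hx].
  - intros i _ V V' -> -> Hne; congruence.
  - intros x Hx; exists 1%nat; split; [lia | exists A; auto].
Qed.

Lemma decomposes_weaken (Rs Rs' : nat -> R) (X Y : mfamily M) :
  (forall i, Rs i <= Rs' i) -> decomposes Rs' X Y -> decomposes Rs X Y.
Proof.
  intros Hle [k Hk]; exists k; intros A HA.
  destruct (Hk A HA) as (U & Hsub & Hdisj & Hcov).
  exists U; split; [exact Hsub | split; [|exact Hcov]].
  intros i Hi V V' HV HV' Hne x y Hx Hy.
  specialize (Hdisj i Hi V V' HV HV' Hne x y Hx Hy); specialize (Hle i); lra.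
Qed.

Lemma decomposes_sub Rs (X X' Y : mfamily M) :
  (forall A, X' A -> X A) -> decomposes Rs X Y -> decomposes Rs X' Y.
Proof. intros HX' [k Hk]; exists k; intros A HA; exact (Hk A (HX' A HA)). Qed.

Lemma decomposes_with_le k k' Rs (X Y : mfamily M) :
  (k <= k')%nat -> decomposes_with k Rs X Y -> decomposes_with k' Rs X Y.
Proof.
  intros Hkk' Hk A HA; destruct (Hk A HA) as (U & Hsub & Hdisj & Hcov).
  exists (fun i V => (i <= k)%nat /\ U i V); split; [|split].
  - intros i Hi V [Hik HV]; apply (Hsub i); [lia | exact HV].
  - intros i Hi V V' [Hik HV] [_ HV']; apply (Hdisj i); [lia | exact HV | exact HV'].
  - intros x Hx; destruct (Hcov x Hx) as (i & Hi & V & HV & Hxv).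
    exists i; split; [lia | exists V; split; [split; [lia | exact HV] | exact Hxv]].
Qed.

Lemma decomposes_with_target k Rs (X Y Y' : mfamily M) :
  (forall V, Y V -> Y' V) -> decomposes_with k Rs X Y -> decomposes_with k Rs X Y'.
Proof.
  intros HY' Hk A HA; destruct (Hk A HA) as (U & Hsub & Hdisj & Hcov).
  exists U; split; [|split; assumption].
  intros i Hi V HV; destruct (Hsub i Hi V HV); auto.
Qed.

Lemma decomposes_union Rs (X1 X2 Y1 Y2 : mfamily M) :
  decomposes Rs X1 Y1 -> decomposes Rs X2 Y2 ->
  decomposes Rs (fun A => X1 A \/ X2 A) (fun V => Y1 V \/ Y2 V).
Proof.
  intros [k1 H1] [k2 H2]; exists (Nat.max k1 k2).
  assert (H1' : decomposes_with (Nat.max k1 k2) Rs X1 (fun V => Y1 V \/ Y2 V)).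
  { apply (decomposes_with_le k1); [lia |].
    apply (decomposes_with_target _ _ _ Y1); auto. }
  assert (H2' : decomposes_with (Nat.max k1 k2) Rs X2 (fun V => Y1 V \/ Y2 V)).
  { apply (decomposes_with_le k2); [lia |].
    apply (decomposes_with_target _ _ _ Y2); auto. }
  intros A [HA | HA]; [exact (H1' A HA) | exact (H2' A HA)].
Qed.

Lemma bounded_family_union (X1 X2 : mfamily M) :
  bounded_family X1 -> bounded_family X2 -> bounded_family (fun A => X1 A \/ X2 A).
Proof.
  intros [B1 HB1] [B2 HB2]; exists (Rmax B1 B2); intros A [HA | HA] x y Hx Hy.
  - apply Rle_trans with B1; [exact (HB1 A HA x y Hx Hy) | apply Rmax_l].
  - apply Rle_trans with B2; [exact (HB2 A HA x y Hx Hy) | apply Rmax_r].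
Qed.

Lemma decompositions_choice k (m : nat -> nat) (T : nat -> nat -> R)
    (Y : mfamily M) (W : nat -> mfamily M) :
  (forall t, (t < k)%nat -> decomposes_with (m t) (T t) Y (W t)) ->
  exists D : nat -> subspace M -> nat -> mfamily M,
    forall t P, (t < k)%nat -> Y P -> is_decomposition (T t) (m t) (W t) P (D t P).
Proof.
  intros HYW.
  destruct (choice (fun (tP : nat * subspace M) U =>
      (fst tP < k)%nat -> Y (snd tP) ->
      is_decomposition (T (fst tP)) (m (fst tP)) (W (fst tP)) (snd tP) U)) as [D HD].
  { intros [t P]; simpl.
    destruct (classic ((t < k)%nat /\ Y P)) as [[Ht HP] | Hno].
    - destruct (HYW t Ht P HP) as [U HU]; exists U; auto.
    - exists (fun _ _ => False); intros Ht HP; tauto. }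
  exists (fun t P => D (t, P)); intros t P; exact (HD (t, P)).
Qed.

Lemma stepwise_nondecreasing_mono (s : nat -> nat) :
  (forall u, (s u <= s (S u))%nat) -> forall a b, (a <= b)%nat -> (s a <= s b)%nat.
Proof. intros Hstep a b Hab; induction Hab; [lia | specialize (Hstep m); lia]. Qed.

Lemma nondecreasing_block_unique (s : nat -> nat) t t' n :
  (forall u, (s u <= s (S u))%nat) ->
  (s t < n <= s (S t))%nat -> (s t' < n <= s (S t'))%nat -> t = t'.
Proof.
  intros Hstep Hn Hn'.
  pose proof (stepwise_nondecreasing_mono s Hstep) as Hmono.
  destruct (Nat.lt_trichotomy t t') as [Hlt | [Heq | Hlt]]; [| exact Heq |].
  - specialize (Hmono (S t) t' Hlt); lia.
  - specialize (Hmono (S t') t Hlt); lia.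
Qed.

(* The n-th piece family, for s t < n <= s (S t), consists of the
   (n - s t)-th piece families of the decompositions into W t of the pieces
   in the (S t)-th family of X -> Y. *)
Lemma decomposes_with_comp (Rs Rxy : nat -> R) (Ryw : nat -> nat -> R)
    (m s : nat -> nat) k (X Y : mfamily M) (W : nat -> mfamily M) :
  (forall t, s (S t) = (s t + m t)%nat) ->
  decomposes_with k Rxy X Y ->
  (forall t, (t < k)%nat -> decomposes_with (m t) (Ryw t) Y (W t)) ->
  (forall t n, (t < k)%nat -> (s t < n <= s (S t))%nat ->
     Rs n <= Rxy (S t) /\ Rs n <= Ryw t (n - s t)%nat) ->
  decomposes_with (s k) Rs X (fun V => exists t, (t < k)%nat /\ W t V).
Proof.
  intros Hs HXY HYW HRs A HA.
  destruct (HXY A HA) as (U & Usub & Udisj & Ucov).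
  destruct (decompositions_choice k m Ryw Y W HYW) as [D HD].
  assert (Hstep : forall u, (s u <= s (S u))%nat) by (intros u; rewrite Hs; lia).
  assert (Hpiece : forall t n P V, (t < k)%nat -> (s t < n <= s (S t))%nat ->
            U (S t) P -> D t P (n - s t)%nat V ->
            Y P /\ subset P A /\ W t V /\ subset V P).
  { intros t n P V Ht Hn HP HV.
    destruct (Usub (S t) ltac:(lia) P HP) as [HYP HPA].
    destruct (HD t P Ht HYP) as (Dsub & _ & _).
    rewrite Hs in Hn; destruct (Dsub (n - s t)%nat ltac:(lia) V HV); auto. }
  exists (fun n V => exists t P, (t < k)%nat /\ (s t < n <= s (S t))%nat /\
                                 U (S t) P /\ D t P (n - s t)%nat V).
  split; [|split].
  - intros n _ V (t & P & Ht & Hn & HP & HV).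
    destruct (Hpiece t n P V Ht Hn HP HV) as (_ & HPA & HWV & HVP).
    split; [exists t; auto | intros x Hx; exact (HPA x (HVP x Hx))].
  - intros n _ V V' (t & P & Ht & Hn & HP & HV) (t' & P' & Ht' & Hn' & HP' & HV')
      Hne x y Hx Hy.
    assert (t' = t) as ->.
    { exact (nondecreasing_block_unique s t' t n Hstep Hn' Hn). }
    destruct (Hpiece t n P V Ht Hn HP HV) as (HYP & _ & _ & HVP).
    destruct (Hpiece t n P' V' Ht Hn' HP' HV') as (_ & _ & _ & HVP').
    destruct (HRs t n Ht Hn) as [HRxy HRyw].
    destruct (classic (P = P')) as [<- | HPP].
    + destruct (HD t P Ht HYP) as (_ & Ddisj & _).
      rewrite Hs in Hn.
      specialize (Ddisj (n - s t)%nat ltac:(lia) V V' HV HV' Hne x y Hx Hy); lra.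
    + specialize (Udisj (S t) ltac:(lia) P P' HP HP' HPP x y (HVP x Hx) (HVP' y Hy)).
      lra.
  - intros x Hx; destruct (Ucov x Hx) as ([| t] & Hi & P & HP & HxP); [lia |].
    destruct (Usub (S t) Hi P HP) as [HYP _].
    destruct (HD t P ltac:(lia) HYP) as (_ & _ & Dcov).
    destruct (Dcov x HxP) as (j & Hj & V & HV & HxV).
    pose proof (stepwise_nondecreasing_mono s Hstep (S t) k ltac:(lia)) as Hsk.
    rewrite Hs in Hsk.
    exists (s t + j)%nat; split; [lia |].
    exists V; split; [| exact HxV].
    exists t, P; split; [lia | split; [rewrite Hs; lia | split; [exact HP |]]].
    replace (s t + j - s t)%nat with j by lia; exact HV.
Qed.

End Decompositions.

Section Classes.

Variables (O : Type) (lt : O -> O -> Prop) (M : MetricSpace).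

Lemma inC_sub c (Z Z' : mfamily M) :
  (forall V, Z' V -> Z V) -> inC lt c Z -> inC lt c Z'.
Proof.
  intros HZ' HZ; revert HZ'; destruct HZ as [a Z0 Hmin [B HB] | a Z0 Hpos HR]; intros HZ'.
  - apply inC_zero; [exact Hmin |]; exists B; intros A HA; exact (HB A (HZ' A HA)).
  - apply inC_succ; [exact Hpos |]; intros Rs.
    destruct (HR Rs) as (b & W & Hb & HW & HZW).
    exists b, W; repeat split; auto; exact (decomposes_sub M Rs Z0 Z' W HZ' HZW).
Qed.

Lemma inC_le b c (Z : mfamily M) : inC lt b Z -> b = c \/ lt b c -> inC lt c Z.
Proof.
  intros HZ [<- | Hbc]; [exact HZ |].
  apply inC_succ; [exists b; exact Hbc |]; intros Rs.
  exists b, Z; repeat split; auto; apply decomposes_refl.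
Qed.

Lemma inC_pos_decomposition_choice a (Y : mfamily M) :
  inC lt a Y -> (exists b, lt b a) ->
  exists (b : (nat -> R) -> O) (W : (nat -> R) -> mfamily M) (m : (nat -> R) -> nat),
    forall Rs, lt (b Rs) a /\ inC lt (b Rs) (W Rs) /\
               decomposes_with M (m Rs) Rs Y (W Rs).
Proof.
  intros HY [b0 Hb0].
  assert (HR : forall Rs, exists b W, lt b a /\ inC lt b W /\ decomposes Rs Y W).
  { inversion HY as [a' Y' Hmin | a' Y' _ HR]; [destruct (Hmin b0 Hb0) | exact HR]. }
  destruct (choice (fun Rs (bWm : O * (mfamily M * nat)) =>
      let '(b, (W, m)) := bWm in
      lt b a /\ inC lt b W /\ decomposes_with M m Rs Y W)) as [f Hf].
  { intros Rs; destruct (HR Rs) as (b & W & Hb & HW & [m Hm]).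
    exists (b, (W, m)); auto. }
  exists (fun Rs => fst (f Rs)), (fun Rs => fst (snd (f Rs))), (fun Rs => snd (snd (f Rs))).
  intros Rs; specialize (Hf Rs); destruct (f Rs) as (b, (W, m)); exact Hf.
Qed.

Hypothesis Hwo : well_order lt.

Lemma lt_join a b1 b2 :
  lt b1 a -> lt b2 a ->
  exists c, lt c a /\ (b1 = c \/ lt b1 c) /\ (b2 = c \/ lt b2 c).
Proof.
  destruct Hwo as (_ & _ & Htri); intros Hb1 Hb2.
  destruct (Htri b1 b2) as [H12 | [<- | H21]].
  - exists b2; auto.
  - exists b1; auto.
  - exists b1; auto.
Qed.

Lemma inC_union a (Z1 Z2 : mfamily M) :
  inC lt a Z1 -> inC lt a Z2 -> inC lt a (fun V => Z1 V \/ Z2 V).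
Proof.
  destruct Hwo as (Hwf & _ & _).
  revert Z1 Z2; induction a as [a IH] using (well_founded_ind Hwf).
  intros Z1 Z2 H1 H2.
  inversion H1 as [a1 Z1' Hmin1 HB1 | a1 Z1' Hpos1 HR1]; subst;
    inversion H2 as [a2 Z2' Hmin2 HB2 | a2 Z2' Hpos2 HR2]; subst.
  - apply inC_zero; [exact Hmin1 | exact (bounded_family_union M _ _ HB1 HB2)].
  - destruct Hpos2 as [b Hb]; destruct (Hmin1 b Hb).
  - destruct Hpos1 as [b Hb]; destruct (Hmin2 b Hb).
  - apply inC_succ; [exact Hpos1 |]; intros Rs.
    destruct (HR1 Rs) as (b1 & W1 & Hb1 & HW1 & HZW1).
    destruct (HR2 Rs) as (b2 & W2 & Hb2 & HW2 & HZW2).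
    destruct (lt_join _ b1 b2 Hb1 Hb2) as (c & Hc & Hb1c & Hb2c).
    exists c, (fun V => W1 V \/ W2 V); split; [exact Hc | split].
    + apply IH; [exact Hc | exact (inC_le _ _ _ HW1 Hb1c) | exact (inC_le _ _ _ HW2 Hb2c)].
    + exact (decomposes_union M Rs _ _ _ _ HZW1 HZW2).
Qed.

Lemma inC_finite_union a (b : nat -> O) (Z : nat -> mfamily M) :
  (forall t, lt (b t) a /\ inC lt (b t) (Z t)) ->
  forall k, exists c, lt c a /\ inC lt c (fun V => exists t, (t < k)%nat /\ Z t V).
Proof.
  intros HZ k; induction k as [| k (c & Hc & HC)].
  - destruct (HZ 0%nat) as [Hb0 HZ0]; exists (b 0%nat); split; [exact Hb0 |].
    apply (inC_sub _ (Z 0%nat)); [intros V (t & Ht & _); lia | exact HZ0].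
  - destruct (HZ k) as [Hbk HZk].
    destruct (lt_join a c (b k) Hc Hbk) as (d & Hd & Hcd & Hbkd).
    exists d; split; [exact Hd |].
    apply (inC_sub _ (fun V => (exists t, (t < k)%nat /\ Z t V) \/ Z k V)).
    + intros V (t & Ht & HV).
      destruct (Nat.eq_dec t k) as [-> | Hne]; [right; exact HV |].
      left; exists t; split; [lia | exact HV].
    + apply inC_union; [exact (inC_le _ _ _ HC Hcd) | exact (inC_le _ _ _ HZk Hbkd)].
Qed.

End Classes.

Fixpoint running_max (f : nat -> R) (n : nat) : R :=
  match n with
  | O => f O
  | S n' => Rmax (running_max f n') (f n)
  end.

Lemma running_max_ge f n : f n <= running_max f n.
Proof. destruct n; simpl; [lra | apply Rmax_r]. Qed.

Lemma running_max_mono f a b : (a <= b)%nat -> running_max f a <= running_max f b.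
Proof.
  induction 1; [lra |].
  apply Rle_trans with (running_max f m); [exact IHle | apply Rmax_l].
Qed.

(* Block t occupies the indices (block_offsets len t, block_offsets len (S t)]; its
   length len n may depend on its starting offset n. *)
Fixpoint block_offsets (len : nat -> nat) (t : nat) : nat :=
  match t with
  | O => O
  | S t' => (block_offsets len t' + len (block_offsets len t'))%nat
  end.

Theorem mainTheorem5 (O : Type) (lt : O -> O -> Prop) (Hwo : well_order lt)
  (alpha : O) (Halpha : exists b, lt b alpha)
  (M : MetricSpace) (X Y : mfamily M) :
  inC lt alpha Y ->
  (forall Rs : nat -> R, decomposes Rs X Y) ->
  inC lt alpha X.
Proof.
  intros HY HXY.
  destruct (inC_pos_decomposition_choice O lt M alpha Y HY Halpha) as (b & W & m & HW).
  apply inC_succ; [exact Halpha |]; intros Rs.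
  set (Rmono := running_max Rs).
  set (T := fun n j => Rmono (n + j)%nat).
  set (s := block_offsets (fun n => m (T n))).
  destruct (HXY (fun t => Rmono (s t))) as [k Hk].
  destruct (inC_finite_union O lt M Hwo alpha (fun t => b (T (s t)))
              (fun t => W (T (s t)))) with (k := k) as (c & Hc & HC).
  { intros t; destruct (HW (T (s t))) as (Hb & HWt & _); split; assumption. }
  exists c, (fun V => exists t, (t < k)%nat /\ W (T (s t)) V).
  split; [exact Hc | split; [exact HC |]].
  apply (decomposes_weaken M _ Rmono); [apply running_max_ge |].
  exists (s k).
  apply (decomposes_with_comp M Rmono (fun t => Rmono (s t)) (fun t => T (s t))
           (fun t => m (T (s t))) s k X Y (fun t => W (T (s t)))); auto.
  - intros t _; apply HW.
  - intros t n _ Hn; split.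
    + apply running_max_mono; lia.
    + unfold T; replace (s t + (n - s t))%nat with n by lia; lra.
Qed.
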